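(* Let $V=\mathrm{GF}(2)^n$ with $n\in\{1,2\}$ and let $g:V^3\to\mathrm{GF}(2)$ be a trilinear form satisfying $g(x,y,z)=g(z,y,x)$ for all $x,y,z\in V$. Then there is $0\ne x\in V$ such that the induced bilinear form $g(x,-,-)$ is symmetric. *)

From HB Require Import structures.
From mathcomp Require Import all_boot all_order all_algebra.
Set Implicit Arguments. Unset Strict Implicit. Unset Printing Implicit Defensive.
Import GRing.Theory.
Local Open Scope ring_scope.

Definition trilinear (F : fieldType) (V : lmodType F) (g : V -> V -> V -> F) : Prop :=
  (forall (a : F) (x x' y z : V), g (a *: x + x') y z = a * g x y z + g x' y z) /\
  (forall (a : F) (x y y' z : V), g x (a *: y + y') z = a * g x y z + g x y' z) /\
  (forall (a : F) (x y z z' : V), g x y (a *: z + z') = a * g x y z + g x y z').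

From HB Require Import structures.
From mathcomp Require Import all_boot all_order all_algebra.
Set Implicit Arguments. Unset Strict Implicit. Unset Printing Implicit Defensive.
Import GRing.Theory.
Local Open Scope ring_scope.

(* Write e_i for the standard basis vectors of F^n.  A bilinear
   form h on F^n is symmetric as soon as h e_i e_j = h e_j e_i for all basis
   indices (expand both arguments in the basis).  For n = 1 there is a single
   basis vector, so every bilinear form is symmetric and x = e_0 works.  For
   n = 2 the only condition left is h e_0 e_1 = h e_1 e_0, so the forms
   g x (-) (-) that are symmetric are exactly those with x in the kernel of
   the linear functional  x |-> g x e_0 e_1 - g x e_1 e_0  on F^2; such a
   functional on a 2-dimensional space always vanishes at a nonzero vector. *)

Definition lin_form (F : fieldType) (V : lmodType F) (f : V -> F) : Prop :=
  forall (a : F) (x x' : V), f (a *: x + x') = a * f x + f x'.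

Section LinearFunctional.
Variables (F : fieldType) (V : lmodType F) (f : V -> F).
Hypothesis f_lin : lin_form f.

Lemma lin_form0 : f 0 = 0.
Proof.
have := f_lin 1 0 0; rewrite scaler0 addr0 mul1r -{1}[f 0]addr0.
by move=> /addrI /esym.
Qed.

Lemma lin_formZ (a : F) (x : V) : f (a *: x) = a * f x.
Proof. by have := f_lin a x 0; rewrite addr0 lin_form0 addr0. Qed.

End LinearFunctional.

Lemma lin_form_basis (F : fieldType) (n : nat) (f : 'rV[F]_n -> F) :
  lin_form f -> forall y, f y = \sum_(j < n) y 0 j * f (delta_mx 0 j).
Proof.
move=> f_lin y; rewrite {1}(row_sum_delta y).
elim/big_rec2: _ => [|j s1 s2 _ <-]; first exact: lin_form0.
exact: f_lin.
Qed.

Lemma delta_mx_neq0 (F : fieldType) (n : nat) (i : 'I_n) : (delta_mx 0 i : 'rV[F]_n) != 0.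
Proof. by apply/eqP => /matrixP /(_ 0 i) /eqP; rewrite !mxE !eqxx oner_eq0. Qed.

(* A linear functional on F^2 has a nonzero vector in its kernel:
   if phi e_0 <> 0, then (phi e_1) e_0 - (phi e_0) e_1 is such a vector. *)
Lemma lin_form2_kernel (F : fieldType) (phi : 'rV[F]_2 -> F) :
  lin_form phi -> exists2 x : 'rV[F]_2, x != 0 & phi x = 0.
Proof.
move=> phi_lin; set e0 : 'rV[F]_2 := delta_mx 0 0; set e1 : 'rV[F]_2 := delta_mx 0 1.
have [phi_e0|phi_e0] := eqVneq (phi e0) 0.
  by exists e0; first exact: delta_mx_neq0.
exists (phi e1 *: e0 + (- phi e0) *: e1).
  apply/eqP => /matrixP /(_ 0 1); rewrite !mxE /= mulr0 mulr1 add0r.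
  by move/eqP; rewrite oppr_eq0 (negPf phi_e0).
by rewrite phi_lin (lin_formZ phi_lin) mulrC mulNr addrN.
Qed.

Lemma sym_of_basis (F : fieldType) (n : nat) (h : 'rV[F]_n -> 'rV[F]_n -> F) :
  (forall z, lin_form (h^~ z)) -> (forall y, lin_form (h y)) ->
  (forall i j, h (delta_mx 0 i) (delta_mx 0 j) = h (delta_mx 0 j) (delta_mx 0 i)) ->
  forall y z, h y z = h z y.
Proof.
move=> hl hr hb y z.
rewrite (lin_form_basis (hl z) y) (lin_form_basis (hl y) z).
under eq_bigr => i _ do rewrite (lin_form_basis (hr _) z) mulr_sumr.
under [RHS]eq_bigr => i _ do rewrite (lin_form_basis (hr _) y) mulr_sumr.
rewrite exchange_big /=; apply: eq_bigr => j _; apply: eq_bigr => i _.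
by rewrite hb mulrCA.
Qed.

Lemma sym2_of_offdiag (F : fieldType) (h : 'rV[F]_2 -> 'rV[F]_2 -> F) :
  (forall z, lin_form (h^~ z)) -> (forall y, lin_form (h y)) ->
  h (delta_mx 0 0) (delta_mx 0 1) = h (delta_mx 0 1) (delta_mx 0 0) ->
  forall y z, h y z = h z y.
Proof.
move=> hl hr h01; apply: sym_of_basis => // i j.
have ord2 (k : 'I_2) : k = 0 \/ k = 1.
  by case: k => [[|[|m]] Hm]; [left|right|]; try exact/val_inj.
by case: (ord2 i) => ->; case: (ord2 j) => ->.
Qed.

Theorem lemma4p7 (n : nat) (hn : (n == 1)%N || (n == 2)%N)
  (g : 'rV['F_2]_n -> 'rV['F_2]_n -> 'rV['F_2]_n -> 'F_2)
  (hg : trilinear g)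
  (hsym : forall x y z : 'rV['F_2]_n, g x y z = g z y x) :
  exists2 x : 'rV['F_2]_n, x != 0 & forall y z : 'rV['F_2]_n, g x y z = g x z y.
Proof.
case: hg => [lin1 [lin2 lin3]].
have lin_y x z : lin_form (fun y => g x y z) by move=> a y y'; exact: lin2.
have lin_z x y : lin_form (g x y) by move=> a z z'; exact: lin3.
case/orP: hn => /eqP En; subst n.
  exists (delta_mx 0 0); first exact: delta_mx_neq0.
  by apply: sym_of_basis => // i j; rewrite !ord1.
set e0 : 'rV['F_2]_2 := delta_mx 0 0; set e1 : 'rV['F_2]_2 := delta_mx 0 1.
have asym_lin : lin_form (fun x => g x e0 e1 - g x e1 e0).
  by move=> a x x'; rewrite !lin1 mulrBr addrACA opprD.
have [x x_neq0 /eqP asym_x] := lin_form2_kernel asym_lin.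
exists x => //; apply: sym2_of_offdiag => //.
by apply/eqP; rewrite -subr_eq0.
Qed.
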